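(* Let $C:I\to\mathbb R^n$ be a smooth homotopy such that every curve $\theta\mapsto C(\theta,v)$ is immersed. Then for every $v\in[0,1]$ $$\frac{d}{dv}\sqrt{\mathrm{len}(C)(v)}\le\frac12\Big(\int_{S^1}\langle H,\partial_vC\rangle^2|\partial_\theta C|\,d\theta\Big)^{1/2},$$ and consequently for all $0\le v'<v''\le1$ $$\sqrt{\mathrm{len}(C)(v'')}-\sqrt{\mathrm{len}(C)(v')}\le\frac{\sqrt{J(C)}}{2}\sqrt{v''-v'} .$$ In particular $\sqrt{\mathrm{len}(C)}$ is Hölder continuous of exponent $1/2$ when $J(C)<\infty$.
   Context: $S^1=\mathbb R/2\pi\mathbb Z$, $I=S^1\times[0,1]$. $\mathrm{len}(C)(v)=\int_{S^1}|\partial_\theta C(\theta,v)|\,d\theta$. $T=\partial_\theta C/|\partial_\theta C|$, $H=\frac1{|\partial_\theta C|}\partial_\theta T$ (curvature vector), $\pi_Nw=w-\langle w,T\rangle T$, and $J(C)=\int_I|H|^2|\pi_N\partial_vC|^2|\partial_\theta C|\,d\theta\,dv$. *)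

From Stdlib Require Import Reals.
From Coquelicot Require Import Coquelicot.
Open Scope R_scope.

(* A curve/homotopy in R^n is given componentwise: C i th v, for i < n. *)
Definition homotopy := nat -> R -> R -> R.

Fixpoint sumR (n : nat) (f : nat -> R) : R :=
  match n with O => 0 | S m => sumR m f + f m end.

Definition inner (n : nat) (a b : nat -> R) : R := sumR n (fun i => a i * b i).
Definition vnorm (n : nat) (a : nat -> R) : R := sqrt (inner n a a).

Definition continuous2 (f : R -> R -> R) : Prop :=
  forall x y, continuous (fun p : R * R => f (fst p) (snd p)) (x, y).

Fixpoint Ck (k : nat) (f : R -> R -> R) : Prop :=
  continuous2 f /\
  match k with
  | O => True
  | S k' =>
      (forall x y, ex_derive (fun t => f t y) x /\ ex_derive (fun t => f x t) y) /\
      Ck k' (fun x y => Derive (fun t => f t y) x) /\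
      Ck k' (fun x y => Derive (fun t => f x t) y)
  end.

Definition smooth2 (f : R -> R -> R) : Prop := forall k, Ck k f.

Definition dth (C : homotopy) (th v : R) : nat -> R :=
  fun i => Derive (fun t => C i t v) th.
Definition dv (C : homotopy) (th v : R) : nat -> R :=
  fun i => Derive (fun s => C i th s) v.

Definition speed (n : nat) (C : homotopy) (th v : R) : R := vnorm n (dth C th v).

Definition tangent (n : nat) (C : homotopy) (th v : R) : nat -> R :=
  fun i => dth C th v i / speed n C th v.

Definition curv (n : nat) (C : homotopy) (th v : R) : nat -> R :=
  fun i => / speed n C th v * Derive (fun t => tangent n C t v i) th.

Definition projN (n : nat) (C : homotopy) (th v : R) (w : nat -> R) : nat -> R :=
  fun i => w i - inner n w (tangent n C th v) * tangent n C th v i.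

Definition len (n : nat) (C : homotopy) (v : R) : R :=
  RInt (fun th => speed n C th v) 0 (2 * PI).

Definition Jfun (n : nat) (C : homotopy) : R :=
  RInt (fun v => RInt (fun th =>
      (vnorm n (curv n C th v)) ^ 2 *
      (vnorm n (projN n C th v (dv C th v))) ^ 2 *
      speed n C th v) 0 (2 * PI)) 0 1.

(* Differentiating under the integral sign, [len'] is the integral of
   [<d_theta C, d_v d_theta C> / |d_theta C|]; integrating by parts against the periodic
   function [<T, d_v C>] gives the first variation formula
   [len' = - int <H, d_v C> |d_theta C| dtheta].  Cauchy-Schwarz with weight [|d_theta C|]
   bounds [|len'|] by [(int <H, d_v C>^2 |d_theta C|)^(1/2) len^(1/2)], which is the
   derivative bound for [sqrt len].  As [H] is normal to [T],
   [<H, d_v C>^2 = <H, pi_N d_v C>^2 <= |H|^2 |pi_N d_v C|^2], so [|(sqrt len)'| <= sqrt (j v) / 2]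
   where [J(C) = int j]; integrating this from [v'] to [v''] and applying Cauchy-Schwarz in [v]
   gives the 1/2-Hoelder estimate. *)

From Stdlib Require Import Reals Lra Lia.
From Coquelicot Require Import Coquelicot.
Open Scope R_scope.

Lemma sumR_ext n f g : (forall i, (i < n)%nat -> f i = g i) -> sumR n f = sumR n g.
Proof.
  induction n as [|n IH]; intros Hfg; simpl; [reflexivity|].
  rewrite IH, Hfg; auto; intros; apply Hfg; lia.
Qed.

Lemma sumR_plus n f g : sumR n (fun i => f i + g i) = sumR n f + sumR n g.
Proof. induction n as [|n IH]; simpl; [|rewrite IH]; ring. Qed.

Lemma sumR_scal n c f : sumR n (fun i => c * f i) = c * sumR n f.
Proof. induction n as [|n IH]; simpl; [|rewrite IH]; ring. Qed.

Lemma sumR_minus n f g : sumR n (fun i => f i - g i) = sumR n f - sumR n g.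
Proof. induction n as [|n IH]; simpl; [|rewrite IH]; ring. Qed.

Lemma sumR_ge0 n f : (forall i, (i < n)%nat -> 0 <= f i) -> 0 <= sumR n f.
Proof.
  induction n as [|n IH]; intros Hf; simpl; [lra|].
  assert (0 <= f n) by (apply Hf; lia).
  assert (0 <= sumR n f) by (apply IH; intros; apply Hf; lia).
  lra.
Qed.

Lemma inner_ext n a b a' b' :
  (forall i, (i < n)%nat -> a i * b i = a' i * b' i) -> inner n a b = inner n a' b'.
Proof. apply sumR_ext. Qed.

Lemma inner_sym n a b : inner n a b = inner n b a.
Proof. apply inner_ext; intros; ring. Qed.

Lemma inner_ge0 n a : 0 <= inner n a a.
Proof. apply sumR_ge0; intros; apply Rle_0_sqr. Qed.

Lemma inner_minus_scalr n a b k c :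
  inner n a (fun i => b i - k * c i) = inner n a b - k * inner n a c.
Proof. unfold inner; rewrite <- sumR_scal, <- sumR_minus; apply sumR_ext; intros; ring. Qed.

Lemma vnorm_ge0 n a : 0 <= vnorm n a.
Proof. apply sqrt_pos. Qed.

Lemma vnorm_sqr n a : vnorm n a ^ 2 = inner n a a.
Proof. unfold vnorm; rewrite pow2_sqrt; [reflexivity | apply inner_ge0]. Qed.

Lemma vnorm_pos_inner n a : 0 < vnorm n a -> 0 < inner n a a.
Proof. intros H; apply sqrt_lt_0_alt; rewrite sqrt_0; exact H. Qed.

Lemma discriminant_le X P Y :
  0 <= Y -> (forall l, 0 <= X - 2 * l * P + l * l * Y) -> P ^ 2 <= X * Y.
Proof.
  intros HY Hq. destruct HY as [HY | <-].
  - specialize (Hq (P / Y)).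
    replace (X - 2 * (P / Y) * P + P / Y * (P / Y) * Y) with ((X * Y - P ^ 2) / Y)
      in Hq by (field; lra).
    apply Rmult_le_compat_r with (r := Y) in Hq; [|lra].
    unfold Rdiv in Hq. rewrite Rmult_0_l, Rmult_assoc, Rinv_l in Hq; lra.
  - destruct (Req_dec P 0) as [-> | HP]; [lra|].
    specialize (Hq ((X + 1) / (2 * P))).
    replace (X - 2 * ((X + 1) / (2 * P)) * P + (X + 1) / (2 * P) * ((X + 1) / (2 * P)) * 0)
      with (-1) in Hq by (field; exact HP).
    lra.
Qed.

Lemma inner_Cauchy_Schwarz n a b : inner n a b ^ 2 <= inner n a a * inner n b b.
Proof.
  apply discriminant_le; [apply inner_ge0|]. intros l.
  replace (inner n a a - 2 * l * inner n a b + l * l * inner n b b)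
    with (inner n (fun i => a i - l * b i) (fun i => a i - l * b i)).
  - apply inner_ge0.
  - unfold inner. induction n as [|n IH]; simpl; [ring | rewrite IH; ring].
Qed.

Lemma is_derive_sumR n (f : nat -> R -> R) (df : nat -> R) x :
  (forall i, (i < n)%nat -> is_derive (f i) x (df i)) ->
  is_derive (fun t => sumR n (fun i => f i t)) x (sumR n df).
Proof.
  induction n as [|n IH]; intros Hf; simpl.
  - apply (@is_derive_const R_AbsRing R_NormedModule).
  - apply (is_derive_plus (fun t => sumR n (fun i => f i t)) (f n)).
    + apply IH; intros; apply Hf; lia.
    + apply Hf; lia.
Qed.

Lemma is_derive_inner n (A B : R -> nat -> R) (dA dB : nat -> R) x :
  (forall i, (i < n)%nat -> is_derive (fun t => A t i) x (dA i)) ->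
  (forall i, (i < n)%nat -> is_derive (fun t => B t i) x (dB i)) ->
  is_derive (fun t => inner n (A t) (B t)) x (inner n dA (B x) + inner n (A x) dB).
Proof.
  intros HA HB. unfold inner. rewrite <- sumR_plus.
  apply (is_derive_sumR n (fun i t => A t i * B t i)). intros i Hi.
  replace (dA i * B x i + A x i * dB i) with (plus (mult (dA i) (B x i)) (mult (A x i) (dB i)))
    by (unfold plus, mult; simpl; ring).
  apply (is_derive_mult (fun t => A t i) (fun t => B t i)); auto.
  intros; apply Rmult_comm.
Qed.

Lemma is_derive_vnorm n (A : R -> nat -> R) (dA : nat -> R) x :
  (forall i, (i < n)%nat -> is_derive (fun t => A t i) x (dA i)) ->
  0 < vnorm n (A x) ->
  is_derive (fun t => vnorm n (A t)) x (inner n (A x) dA / vnorm n (A x)).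
Proof.
  intros HA Hpos. unfold vnorm.
  replace (inner n (A x) dA / sqrt (inner n (A x) (A x)))
    with ((inner n dA (A x) + inner n (A x) dA) / (2 * sqrt (inner n (A x) (A x))))
    by (rewrite inner_sym; field; apply Rgt_not_eq, Hpos).
  apply is_derive_sqrt; [apply is_derive_inner; exact HA | apply vnorm_pos_inner, Hpos].
Qed.

Lemma is_derive_unit n (A : R -> nat -> R) (dA : nat -> R) x k :
  (forall i, (i < n)%nat -> is_derive (fun t => A t i) x (dA i)) ->
  0 < vnorm n (A x) -> (k < n)%nat ->
  is_derive (fun t => A t k / vnorm n (A t)) x
    (dA k / vnorm n (A x) - A x k * inner n (A x) dA / vnorm n (A x) ^ 3).
Proof.
  intros HA Hpos Hk.
  replace (dA k / vnorm n (A x) - A x k * inner n (A x) dA / vnorm n (A x) ^ 3)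
    with ((dA k * vnorm n (A x) - A x k * (inner n (A x) dA / vnorm n (A x)))
          / (vnorm n (A x) ^ 2))
    by (field; apply Rgt_not_eq, Hpos).
  apply is_derive_div; [apply HA, Hk | | apply Rgt_not_eq, Hpos].
  apply is_derive_vnorm; [exact HA | exact Hpos].
Qed.

Lemma continuity_2d_pt_sumR n (f : nat -> R -> R -> R) x y :
  (forall i, (i < n)%nat -> continuity_2d_pt (f i) x y) ->
  continuity_2d_pt (fun u v => sumR n (fun i => f i u v)) x y.
Proof.
  induction n as [|n IH]; intros Hf; simpl.
  - apply continuity_2d_pt_const.
  - apply (continuity_2d_pt_plus (fun u v => sumR n (fun i => f i u v)) (f n)).
    + apply IH; intros; apply Hf; lia.
    + apply Hf; lia.
Qed.

Lemma continuity_2d_pt_inner n (a b : R -> R -> nat -> R) x y :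
  (forall i, (i < n)%nat -> continuity_2d_pt (fun u v => a u v i) x y) ->
  (forall i, (i < n)%nat -> continuity_2d_pt (fun u v => b u v i) x y) ->
  continuity_2d_pt (fun u v => inner n (a u v) (b u v)) x y.
Proof.
  intros Ha Hb. apply (continuity_2d_pt_sumR n (fun i u v => a u v i * b u v i)).
  intros i Hi. apply continuity_2d_pt_mult; auto.
Qed.

Lemma continuity_2d_pt_vnorm n (a : R -> R -> nat -> R) x y :
  (forall i, (i < n)%nat -> continuity_2d_pt (fun u v => a u v i) x y) ->
  continuity_2d_pt (fun u v => vnorm n (a u v)) x y.
Proof.
  intros Ha. apply (continuity_1d_2d_pt_comp sqrt (fun u v => inner n (a u v) (a u v))).
  - apply continuity_pt_sqrt, inner_ge0.
  - apply continuity_2d_pt_inner; auto.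
Qed.

Lemma continuity_2d_pt_div f g x y :
  continuity_2d_pt f x y -> continuity_2d_pt g x y -> g x y <> 0 ->
  continuity_2d_pt (fun u v => f u v / g u v) x y.
Proof. intros; apply continuity_2d_pt_mult; [|apply continuity_2d_pt_inv]; auto. Qed.

Lemma continuity_2d_pt_pow f k x y :
  continuity_2d_pt f x y -> continuity_2d_pt (fun u v => f u v ^ k) x y.
Proof.
  intros Hf. induction k as [|k IH]; simpl.
  - apply continuity_2d_pt_const.
  - apply continuity_2d_pt_mult; auto.
Qed.

Lemma continuity_2d_pt_swap f x y :
  continuity_2d_pt f x y -> continuity_2d_pt (fun u v => f v u) y x.
Proof. intros Hf eps. destruct (Hf eps) as [d Hd]. exists d; intros u v Hu Hv; auto. Qed.

Lemma continuity_2d_pt_continuous f x y :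
  continuity_2d_pt f x y -> continuous (fun t => f t y) x.
Proof.
  intros Hf. apply continuity_pt_filterlim, continuity_pt_locally. intros eps.
  destruct (Hf eps) as [d Hd]. exists d. intros u Hu. apply Hd; [exact Hu|].
  rewrite Rminus_eq_0, Rabs_R0. apply cond_pos.
Qed.

Lemma continuity_2d_pt_ext_pos (P F G : R -> R -> R) x y :
  (forall u v, 0 < P u v -> F u v = G u v) -> continuity_2d_pt P x y -> 0 < P x y ->
  continuity_2d_pt G x y -> continuity_2d_pt F x y.
Proof.
  intros HFG HP Hxy HG. apply continuity_2d_pt_ext_loc with G; [|exact HG].
  destruct (HP (mkposreal _ Hxy)) as [d Hd]. exists d. intros u v Hu Hv.
  symmetry; apply HFG. specialize (Hd u v Hu Hv). simpl in Hd.
  apply Rabs_lt_between in Hd. lra.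
Qed.

Section Interval.
Variables (a b : R).
Hypothesis Hab : a <= b.

Lemma locally_pos_segment (F : R -> R -> R) w :
  (forall t, a <= t <= b -> continuity_2d_pt F t w) -> (forall t, a <= t <= b -> 0 < F t w) ->
  exists d : posreal, forall t v, a <= t <= b -> Rabs (v - w) < d -> 0 < F t v.
Proof.
  intros HF Hpos.
  destruct (continuity_ab_min (fun t => F t w) a b Hab) as [tm [Htm Hm]].
  { intros t Ht. apply continuity_pt_filterlim, (continuity_2d_pt_continuous F), HF, Ht. }
  destruct (uniform_continuity_2d_1d F a b w HF (mkposreal _ (Hpos tm Hm))) as [d Hd].
  exists d. intros t v Ht Hv.
  assert (Hv' : w - d <= v <= w + d) by (apply Rabs_lt_between' in Hv; lra).
  assert (Hw : w - d <= w <= w + d) by (destruct d; simpl; lra).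
  specialize (Hd t w t v Ht Hw Ht Hv').
  rewrite Rminus_eq_0, Rabs_R0 in Hd. specialize (Hd (cond_pos d)). simpl in Hd.
  apply Rabs_lt_between in Hd. specialize (Htm t Ht). lra.
Qed.

Lemma ex_RInt_of_continuity_2d_pt (F : R -> R -> R) v :
  (forall t, a <= t <= b -> continuity_2d_pt F t v) -> ex_RInt (fun t => F t v) a b.
Proof.
  intros HF. apply (ex_RInt_continuous (V := R_CompleteNormedModule)).
  rewrite Rmin_left, Rmax_right by exact Hab.
  intros t Ht. apply (continuity_2d_pt_continuous F), HF, Ht.
Qed.

Lemma continuous_RInt_param (F : R -> R -> R) w :
  (exists d : posreal, forall t v, a <= t <= b -> Rabs (v - w) < d -> continuity_2d_pt F t v) ->
  continuous (fun v => RInt (fun t => F t v) a b) w.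
Proof.
  intros [d Hd].
  assert (Hint : forall v, Rabs (v - w) < d -> ex_RInt (fun t => F t v) a b)
    by (intros v Hv; apply ex_RInt_of_continuity_2d_pt; auto).
  assert (Hw : Rabs (w - w) < d) by (rewrite Rminus_eq_0, Rabs_R0; apply cond_pos).
  apply continuity_pt_filterlim, continuity_pt_locally. intros eps.
  assert (He : 0 < eps / (b - a + 1)) by (apply Rdiv_lt_0_compat; [apply cond_pos | lra]).
  destruct (uniform_continuity_2d_1d' (fun v t => F t v) a b w) with (eps := mkposreal _ He)
    as [e He'].
  { intros t Ht. apply continuity_2d_pt_swap, Hd; auto. }
  assert (Hde : 0 < Rmin d e) by (apply Rmin_pos; apply cond_pos).
  exists (mkposreal _ Hde). intros v Hv. change (Rabs (v - w) < Rmin d e) in Hv.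
  assert (Hvd : Rabs (v - w) < d) by (eapply Rlt_le_trans; [exact Hv | apply Rmin_l]).
  assert (Hve : w - e <= v <= w + e).
  { assert (Rabs (v - w) < e) as Hv' by (eapply Rlt_le_trans; [exact Hv | apply Rmin_r]).
    apply Rabs_lt_between' in Hv'. lra. }
  assert (Hwe : w - e <= w <= w + e) by (destruct e; simpl; lra).
  rewrite <- (RInt_minus (V := R_CompleteNormedModule)) by auto.
  eapply Rle_lt_trans.
  - apply (abs_RInt_le_const _ a b (eps / (b - a + 1))); [exact Hab | |].
    + apply (ex_RInt_minus (V := R_NormedModule)); auto.
    + intros t Ht. apply Rlt_le. specialize (He' t w t v Ht Hwe Ht Hve).
      rewrite Rminus_eq_0, Rabs_R0 in He'. apply (He' (cond_pos e)).
  - assert (0 < eps) by apply cond_pos.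
    apply Rmult_lt_reg_r with (b - a + 1); [lra|]. field_simplify; lra.
Qed.

Lemma RInt_Cauchy_Schwarz (f g : R -> R) :
  ex_RInt (fun t => f t ^ 2 * g t) a b -> ex_RInt (fun t => f t * g t) a b -> ex_RInt g a b ->
  (forall t, a < t < b -> 0 <= g t) ->
  RInt (fun t => f t * g t) a b ^ 2 <= RInt (fun t => f t ^ 2 * g t) a b * RInt g a b.
Proof.
  intros I2 I1 I0 Hg. apply discriminant_le; [apply RInt_ge_0; auto|]. intros l.
  assert (HI : is_RInt (fun t => (f t - l) ^ 2 * g t) a b
    (RInt (fun t => f t ^ 2 * g t) a b - 2 * l * RInt (fun t => f t * g t) a b
     + l * l * RInt g a b)).
  { eapply is_RInt_ext.
    2: { apply (@is_RInt_plus R_NormedModule); [apply (@is_RInt_minus R_NormedModule)|].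
         - apply (RInt_correct (V := R_CompleteNormedModule)), I2.
         - apply (@is_RInt_scal R_NormedModule), (RInt_correct (V := R_CompleteNormedModule)), I1.
         - apply (@is_RInt_scal R_NormedModule), (RInt_correct (V := R_CompleteNormedModule)), I0. }
    intros t _. unfold minus, plus, scal, opp; simpl; unfold mult; simpl. ring. }
  rewrite <- (is_RInt_unique _ _ _ _ HI). apply RInt_ge_0; [exact Hab | eexists; exact HI |].
  intros t Ht. apply Rmult_le_pos; [apply pow2_ge_0 | apply Hg, Ht].
Qed.

Let clamp x := Rmax a (Rmin b x).

Let clamp_id x : a <= x <= b -> clamp x = x.
Proof. intros Hx. unfold clamp, Rmax, Rmin. repeat destruct Rle_dec; lra. Qed.

Let clamp_range x : a <= clamp x <= b.
Proof. unfold clamp, Rmax, Rmin. repeat destruct Rle_dec; lra. Qed.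

Let continuous_clamp x : continuous clamp x.
Proof.
  apply continuity_pt_filterlim, continuity_pt_locally. intros eps. exists eps. intros y Hy.
  change (Rabs (y - x) < eps) in Hy. eapply Rle_lt_trans; [|exact Hy].
  unfold clamp, Rmax, Rmin, Rabs. repeat destruct Rle_dec; repeat destruct Rcase_abs; lra.
Qed.

(* [g] is only continuous on [a, b]: integrate [g (clamp x)] instead, which is continuous
   everywhere, so that the primitive is differentiable up to the endpoints. *)
Lemma sub_le_RInt_of_derive_le (h dh g : R -> R) :
  (forall x, a <= x <= b -> is_derive h x (dh x)) ->
  (forall x, a <= x <= b -> dh x <= g x) ->
  (forall x, a <= x <= b -> continuous g x) ->
  h b - h a <= RInt g a b.
Proof.
  intros Hh Hdh Hg.
  set (gc := fun x => g (clamp x)).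
  assert (Hgc : forall x, continuous gc x).
  { intros x. apply (continuous_comp clamp g); [apply continuous_clamp | apply Hg, clamp_range]. }
  assert (HG : forall x, is_derive (fun y => RInt gc a y) x (gc x)).
  { intros x. apply (is_derive_RInt gc _ a); [|apply Hgc].
    exists (mkposreal 1 Rlt_0_1). intros y _.
    apply (RInt_correct (V := R_CompleteNormedModule)).
    apply (ex_RInt_continuous (V := R_CompleteNormedModule)).
    intros; apply Hgc. }
  assert (HF : forall x, a <= x <= b ->
    is_derive (fun y => h y - RInt gc a y) x (dh x - gc x)).
  { intros x Hx. apply (is_derive_minus (K := R_AbsRing) (V := R_NormedModule));
      [apply Hh, Hx | apply HG]. }
  destruct (MVT_gen (fun y => h y - RInt gc a y) a b (fun x => dh x - gc x)) as [c [Hc Hmvt]];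
    rewrite Rmin_left, Rmax_right in * by exact Hab.
  - intros x Hx. apply HF. lra.
  - intros x Hx. apply continuity_pt_filterlim.
    apply (ex_derive_continuous (K := R_AbsRing) (V := R_NormedModule)
             (fun y => h y - RInt gc a y)).
    eexists; apply HF, Hx.
  - assert (Hgcb : RInt gc a b = RInt g a b).
    { apply RInt_ext. intros x Hx. rewrite Rmin_left, Rmax_right in Hx by exact Hab.
      unfold gc. rewrite clamp_id; lra. }
    assert (Hdc : dh c - gc c <= 0)
      by (unfold gc; rewrite clamp_id by exact Hc; specialize (Hdh c Hc); lra).
    rewrite RInt_point, Hgcb in Hmvt. unfold zero in Hmvt; simpl in Hmvt.
    assert ((dh c - gc c) * (b - a) <= 0) by (apply Rmult_le_0_r; lra).
    lra.
Qed.

Lemma Rabs_sub_le_RInt_of_derive (h dh g : R -> R) :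
  (forall x, a <= x <= b -> is_derive h x (dh x)) ->
  (forall x, a <= x <= b -> Rabs (dh x) <= g x) ->
  (forall x, a <= x <= b -> continuous g x) ->
  Rabs (h b - h a) <= RInt g a b.
Proof.
  intros Hh Hdh Hg. apply Rabs_le. split.
  - enough (- h b - - h a <= RInt g a b) by lra.
    apply (sub_le_RInt_of_derive_le (fun x => - h x) (fun x => - dh x)); auto.
    + intros x Hx. apply (is_derive_opp h), Hh, Hx.
    + intros x Hx. specialize (Hdh x Hx). apply Rabs_le_between in Hdh. lra.
  - apply (sub_le_RInt_of_derive_le _ dh); auto.
    intros x Hx. eapply Rle_trans; [apply Rle_abs | apply Hdh, Hx].
Qed.

End Interval.

Lemma RInt_le_subinterval (f : R -> R) a b c d :
  a <= c -> c <= d -> d <= b -> ex_RInt f a b -> (forall x, a <= x <= b -> 0 <= f x) ->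
  RInt f c d <= RInt f a b.
Proof.
  intros Hac Hcd Hdb If Hf.
  assert (Iad : ex_RInt f a d) by (apply (ex_RInt_Chasles_1 f a d b); [lra | exact If]).
  assert (Icd : ex_RInt f c d) by (apply (ex_RInt_Chasles_2 f a c d); [lra | exact Iad]).
  assert (Iac : ex_RInt f a c) by (apply (ex_RInt_Chasles_1 f a c d); [lra | exact Iad]).
  assert (Idb : ex_RInt f d b) by (apply (ex_RInt_Chasles_2 f a d b); [lra | exact If]).
  rewrite <- (RInt_Chasles f a d b), <- (RInt_Chasles f a c d) by auto.
  assert (0 <= RInt f a c) by (apply RInt_ge_0; auto; intros; apply Hf; lra).
  assert (0 <= RInt f d b) by (apply RInt_ge_0; auto; intros; apply Hf; lra).
  unfold plus; simpl. lra.
Qed.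

Lemma RInt_sqrt_le (J : R -> R) c d :
  c <= d -> (forall x, c <= x <= d -> continuous J x) -> (forall x, c <= x <= d -> 0 <= J x) ->
  RInt (fun x => sqrt (J x)) c d <= sqrt (RInt J c d) * sqrt (d - c).
Proof.
  intros Hcd HJc HJ.
  assert (Hint : forall f : R -> R, (forall x, c <= x <= d -> continuous f x) -> ex_RInt f c d).
  { intros f Hf. apply (ex_RInt_continuous (V := R_CompleteNormedModule)).
    rewrite Rmin_left, Rmax_right by exact Hcd. exact Hf. }
  assert (Hs : forall x, c <= x <= d -> continuous (fun y => sqrt (J y)) x).
  { intros x Hx. apply continuous_comp; [apply HJc, Hx|].
    apply continuity_pt_filterlim, continuity_pt_sqrt, HJ, Hx. }
  assert (HCS : RInt (fun x => sqrt (J x) * 1) c d ^ 2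
                <= RInt (fun x => sqrt (J x) ^ 2 * 1) c d * RInt (fun _ => 1) c d).
  { apply RInt_Cauchy_Schwarz;
      [exact Hcd | | | apply Hint; intros; apply continuous_const | intros; lra].
    all: apply Hint; intros x Hx; change (sqrt (J x) ^ 2) with (sqrt (J x) * (sqrt (J x) * 1)).
    all: repeat first [apply continuous_const | apply Hs, Hx
                      | apply (continuous_mult (K := R_AbsRing))]. }
  rewrite (RInt_ext (fun x => sqrt (J x) * 1) (fun x => sqrt (J x))) in HCS
    by (intros; apply Rmult_1_r).
  rewrite (RInt_ext (fun x => sqrt (J x) ^ 2 * 1) J) in HCS
    by (intros x Hx; rewrite Rmin_left, Rmax_right in Hx by exact Hcd;
        rewrite Rmult_1_r; apply pow2_sqrt, HJ; lra).
  rewrite (RInt_const (V := R_CompleteNormedModule)) in HCS.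
  change (scal (d - c) 1) with ((d - c) * 1) in HCS. rewrite Rmult_1_r in HCS.
  assert (0 <= RInt J c d)
    by (apply RInt_ge_0; [exact Hcd | apply Hint, HJc | intros; apply HJ; lra]).
  apply Rsqr_incr_0_var; [|apply Rmult_le_pos; apply sqrt_pos].
  rewrite Rsqr_mult, !Rsqr_sqrt by lra. unfold Rsqr. simpl in HCS. lra.
Qed.

Lemma Holder_half_of_derive_le (h dh J : R -> R) a b v1 v2 :
  a <= v1 -> v1 <= v2 -> v2 <= b ->
  (forall x, a <= x <= b -> is_derive h x (dh x)) ->
  (forall x, a <= x <= b -> Rabs (dh x) <= sqrt (J x) / 2) ->
  (forall x, a <= x <= b -> continuous J x) -> (forall x, a <= x <= b -> 0 <= J x) ->
  Rabs (h v2 - h v1) <= sqrt (RInt J a b) / 2 * sqrt (v2 - v1).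
Proof.
  intros Hav1 Hv12 Hv2b Hh Hdh HJc HJ.
  assert (Hs : forall x, a <= x <= b -> continuous (fun y => sqrt (J y)) x).
  { intros x Hx. apply continuous_comp; [apply HJc, Hx|].
    apply continuity_pt_filterlim, continuity_pt_sqrt, HJ, Hx. }
  assert (Hint : ex_RInt (fun x => sqrt (J x)) v1 v2).
  { apply (ex_RInt_continuous (V := R_CompleteNormedModule)).
    rewrite Rmin_left, Rmax_right by exact Hv12. intros; apply Hs; lra. }
  assert (Hsub : RInt J v1 v2 <= RInt J a b).
  { apply RInt_le_subinterval; auto.
    apply (ex_RInt_continuous (V := R_CompleteNormedModule)).
    rewrite Rmin_left, Rmax_right by lra. intros; apply HJc; auto. }
  eapply Rle_trans.
  { apply (Rabs_sub_le_RInt_of_derive v1 v2 Hv12 h dh (fun x => sqrt (J x) / 2));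
      intros x Hx; [apply Hh | apply Hdh | ]; try lra.
    apply (continuous_mult (K := R_AbsRing)); [apply Hs; lra | apply continuous_const]. }
  rewrite (RInt_ext (fun x => sqrt (J x) / 2) (fun x => scal (/ 2) (sqrt (J x))))
    by (intros; unfold scal; simpl; unfold mult; simpl; unfold Rdiv; apply Rmult_comm).
  rewrite (RInt_scal (V := R_CompleteNormedModule)) by exact Hint.
  unfold scal; simpl; unfold mult; simpl.
  assert (HCS : RInt (fun x => sqrt (J x)) v1 v2 <= sqrt (RInt J v1 v2) * sqrt (v2 - v1))
    by (apply RInt_sqrt_le; [exact Hv12 | intros; apply HJc; lra | intros; apply HJ; lra]).
  assert (sqrt (RInt J v1 v2) <= sqrt (RInt J a b)) by (apply sqrt_le_1_alt, Hsub).
  assert (0 <= sqrt (v2 - v1)) by apply sqrt_pos.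
  nra.
Qed.

Definition partial1 (f : R -> R -> R) x y := Derive (fun t => f t y) x.
Definition partial2 (f : R -> R -> R) x y := Derive (fun t => f x t) y.

Record C2 (f : R -> R -> R) : Prop := {
  ex_d1 : forall x y, ex_derive (fun t => f t y) x;
  ex_d2 : forall x y, ex_derive (fun t => f x t) y;
  ex_d1d1 : forall x y, ex_derive (fun t => partial1 f t y) x;
  ex_d2d1 : forall x y, ex_derive (fun t => partial1 f x t) y;
  ex_d1d2 : forall x y, ex_derive (fun t => partial2 f t y) x;
  cont_d1 : forall x y, continuity_2d_pt (partial1 f) x y;
  cont_d2 : forall x y, continuity_2d_pt (partial2 f) x y;
  cont_d1d1 : forall x y, continuity_2d_pt (partial1 (partial1 f)) x y;
  cont_d2d1 : forall x y, continuity_2d_pt (partial2 (partial1 f)) x y;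
  cont_d1d2 : forall x y, continuity_2d_pt (partial1 (partial2 f)) x y
}.

Lemma C2_of_smooth2 f : smooth2 f -> C2 f.
Proof.
  intros Hf. destruct (Hf 2%nat) as [_ [Hd [[_ [Hd1 [[H11 _] [H12 _]]]] [_ [Hd2 [[H21 _] _]]]]]].
  assert (Hc : forall g, continuous2 g -> forall x y, continuity_2d_pt g x y)
    by (intros g Hg x y; apply continuity_2d_pt_filterlim, Hg).
  destruct (Hf 1%nat) as [_ [_ [[Hc1 _] [Hc2 _]]]].
  constructor; intros x y.
  - apply (Hd x y).
  - apply (Hd x y).
  - apply (Hd1 x y).
  - apply (Hd1 x y).
  - apply (Hd2 x y).
  - apply Hc, Hc1.
  - apply Hc, Hc2.
  - apply Hc, H11.
  - apply Hc, H12.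
  - apply Hc, H21.
Qed.

Lemma mixed_partials f x y : C2 f -> partial1 (partial2 f) x y = partial2 (partial1 f) x y.
Proof.
  intros Hf. apply Schwarz.
  - exists (mkposreal 1 Rlt_0_1). intros u w _ _.
    repeat split;
      [apply (ex_d1 f Hf) | apply (ex_d2 f Hf) | apply (ex_d1d2 f Hf) | apply (ex_d2d1 f Hf)].
  - apply (cont_d1d2 f Hf).
  - apply (cont_d2d1 f Hf).
Qed.

Lemma Derive_periodic (f : R -> R) c x :
  (forall t, f (t + c) = f t) -> ex_derive f (x + c) -> Derive f (x + c) = Derive f x.
Proof.
  intros Hper Hd.
  rewrite <- (Derive_ext (fun t => f (t + c)) f x Hper).
  rewrite (Derive_comp f (fun t => t + c)); [|exact Hd | auto_derive; auto].
  replace (Derive (fun t => t + c) x) with 1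
    by (symmetry; apply is_derive_unique; auto_derive; auto; ring).
  ring.
Qed.

Definition dthth (C : homotopy) (th v : R) : nat -> R :=
  fun i => Derive (fun t => dth C t v i) th.
Definition dvth (C : homotopy) (th v : R) : nat -> R :=
  fun i => Derive (fun s => dth C th s i) v.

Definition dtangent (n : nat) (C : homotopy) (th v : R) : nat -> R :=
  fun i => dthth C th v i / speed n C th v
           - dth C th v i * inner n (dth C th v) (dthth C th v) / speed n C th v ^ 3.

Definition J_density (n : nat) (C : homotopy) (th v : R) : R :=
  vnorm n (curv n C th v) ^ 2 * vnorm n (projN n C th v (dv C th v)) ^ 2 * speed n C th v.

Definition J_slice (n : nat) (C : homotopy) (v : R) : R :=
  RInt (fun th => J_density n C th v) 0 (2 * PI).

Section Homotopy.
Variables (n : nat) (C : homotopy).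
Hypothesis HC : forall i, (i < n)%nat -> C2 (C i).
Hypothesis Hper : forall i th v, C i (th + 2 * PI) v = C i th v.

Let two_PI_pos : 0 < 2 * PI.
Proof. pose proof PI_RGT_0; lra. Qed.

Lemma speed_ge0 th v : 0 <= speed n C th v.
Proof. apply vnorm_ge0. Qed.

Lemma continuity_2d_pt_dth i th v : (i < n)%nat ->
  continuity_2d_pt (fun t s => dth C t s i) th v.
Proof. intros Hi; apply (cont_d1 _ (HC i Hi)). Qed.

Lemma continuity_2d_pt_dv i th v : (i < n)%nat ->
  continuity_2d_pt (fun t s => dv C t s i) th v.
Proof. intros Hi; apply (cont_d2 _ (HC i Hi)). Qed.

Lemma continuity_2d_pt_speed th v : continuity_2d_pt (speed n C) th v.
Proof. apply (continuity_2d_pt_vnorm n (dth C)); intros i Hi; apply continuity_2d_pt_dth, Hi. Qed.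

Lemma is_derive_speed_v th v : 0 < speed n C th v ->
  is_derive (fun s => speed n C th s) v (inner n (dth C th v) (dvth C th v) / speed n C th v).
Proof.
  intros Hpos.
  apply (is_derive_vnorm n (fun s => dth C th s)); [|exact Hpos].
  intros i Hi. apply Derive_correct, (ex_d2d1 _ (HC i Hi)).
Qed.

Lemma is_derive_tangent th v k : 0 < speed n C th v -> (k < n)%nat ->
  is_derive (fun t => tangent n C t v k) th (dtangent n C th v k).
Proof.
  intros Hpos Hk. apply (is_derive_unit n (fun t => dth C t v)); [|exact Hpos | exact Hk].
  intros i Hi. apply Derive_correct, (ex_d1d1 _ (HC i Hi)).
Qed.

Lemma curvE th v k : 0 < speed n C th v -> (k < n)%nat ->
  curv n C th v k = dtangent n C th v k / speed n C th v.
Proof.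
  intros Hpos Hk. unfold curv, Rdiv. rewrite Rmult_comm. f_equal.
  apply is_derive_unique, is_derive_tangent; assumption.
Qed.

Lemma continuity_2d_pt_tangent th v k : 0 < speed n C th v -> (k < n)%nat ->
  continuity_2d_pt (fun t s => tangent n C t s k) th v.
Proof.
  intros Hpos Hk. apply continuity_2d_pt_div;
    [apply continuity_2d_pt_dth, Hk | apply continuity_2d_pt_speed | lra].
Qed.

Lemma continuity_2d_pt_dtangent th v k : 0 < speed n C th v -> (k < n)%nat ->
  continuity_2d_pt (fun t s => dtangent n C t s k) th v.
Proof.
  intros Hpos Hk.
  assert (Hdd : forall i, (i < n)%nat -> continuity_2d_pt (fun t s => dthth C t s i) th v)
    by (intros i Hi; apply (cont_d1d1 _ (HC i Hi))).
  apply continuity_2d_pt_minus; apply continuity_2d_pt_div.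
  - apply Hdd, Hk.
  - apply continuity_2d_pt_speed.
  - lra.
  - apply continuity_2d_pt_mult; [apply continuity_2d_pt_dth, Hk|].
    apply (continuity_2d_pt_inner n (dth C) (dthth C)); [|exact Hdd].
    intros i Hi; apply continuity_2d_pt_dth, Hi.
  - apply continuity_2d_pt_pow, continuity_2d_pt_speed.
  - apply pow_nonzero; lra.
Qed.

Lemma continuity_2d_pt_curv th v k : 0 < speed n C th v -> (k < n)%nat ->
  continuity_2d_pt (fun t s => curv n C t s k) th v.
Proof.
  intros Hpos Hk.
  apply (continuity_2d_pt_ext_pos (speed n C) _ (fun t s => dtangent n C t s k / speed n C t s));
    [| apply continuity_2d_pt_speed | exact Hpos |].
  - intros t s Hts. apply curvE; assumption.
  - apply continuity_2d_pt_div;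
      [apply continuity_2d_pt_dtangent; assumption | apply continuity_2d_pt_speed | lra].
Qed.

Lemma continuity_2d_pt_dspeed_v th v : 0 < speed n C th v ->
  continuity_2d_pt (fun t s => inner n (dth C t s) (dvth C t s) / speed n C t s) th v.
Proof.
  intros Hpos. apply continuity_2d_pt_div; [| apply continuity_2d_pt_speed | lra].
  apply (continuity_2d_pt_inner n (dth C) (dvth C)); intros i Hi;
    [apply continuity_2d_pt_dth, Hi | apply (cont_d2d1 _ (HC i Hi))].
Qed.

Lemma continuity_2d_pt_Derive_speed_v th v : 0 < speed n C th v ->
  continuity_2d_pt (fun t s => Derive (fun z => speed n C t z) s) th v.
Proof.
  intros Hpos.
  apply (continuity_2d_pt_ext_pos (speed n C) _
           (fun t s => inner n (dth C t s) (dvth C t s) / speed n C t s));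
    [| apply continuity_2d_pt_speed | exact Hpos | apply continuity_2d_pt_dspeed_v, Hpos].
  intros t s Hts. apply is_derive_unique, is_derive_speed_v, Hts.
Qed.

Lemma continuity_2d_pt_inner_curv_dv th v : 0 < speed n C th v ->
  continuity_2d_pt (fun t s => inner n (curv n C t s) (dv C t s)) th v.
Proof.
  intros Hpos.
  apply (continuity_2d_pt_inner n (curv n C) (dv C)); intros i Hi;
    [apply continuity_2d_pt_curv; assumption | apply continuity_2d_pt_dv, Hi].
Qed.

(* [|T| = 1] forces [T . d_theta T = 0]. *)
Lemma inner_curv_tangent th v : 0 < speed n C th v ->
  inner n (curv n C th v) (tangent n C th v) = 0.
Proof.
  intros Hpos.
  set (s := speed n C th v). set (P := inner n (dth C th v) (dthth C th v)).
  assert (Hs : inner n (dth C th v) (dth C th v) = s ^ 2)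
    by (unfold s, speed; rewrite vnorm_sqr; reflexivity).
  transitivity (sumR n (fun i => / s ^ 3 * (dth C th v i * dthth C th v i)
                                 - P / s ^ 5 * (dth C th v i * dth C th v i))).
  - apply sumR_ext; intros i Hi. rewrite curvE by assumption.
    unfold dtangent, tangent. fold s P. field. apply Rgt_not_eq, Hpos.
  - rewrite sumR_minus, !sumR_scal.
    change (/ s ^ 3 * P - P / s ^ 5 * inner n (dth C th v) (dth C th v) = 0).
    rewrite Hs. field. apply Rgt_not_eq, Hpos.
Qed.

Lemma inner_curv_dv_sqr_le th v : 0 < speed n C th v ->
  inner n (curv n C th v) (dv C th v) ^ 2
  <= vnorm n (curv n C th v) ^ 2 * vnorm n (projN n C th v (dv C th v)) ^ 2.
Proof.
  intros Hpos. rewrite !vnorm_sqr.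
  replace (inner n (curv n C th v) (dv C th v))
    with (inner n (curv n C th v) (projN n C th v (dv C th v))).
  - apply inner_Cauchy_Schwarz.
  - unfold projN. rewrite inner_minus_scalr, inner_curv_tangent by assumption. ring.
Qed.

Lemma dth_periodic i v : (i < n)%nat -> dth C (2 * PI) v i = dth C 0 v i.
Proof.
  intros Hi. unfold dth. rewrite <- (Rplus_0_l (2 * PI)).
  apply Derive_periodic; [intros t; apply Hper | apply (ex_d1 _ (HC i Hi))].
Qed.

Lemma dv_periodic i v : dv C (2 * PI) v i = dv C 0 v i.
Proof.
  unfold dv. apply Derive_ext. intros s. rewrite <- (Rplus_0_l (2 * PI)). apply Hper.
Qed.

Lemma tangent_periodic i v : (i < n)%nat -> tangent n C (2 * PI) v i = tangent n C 0 v i.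
Proof.
  intros Hi. unfold tangent, speed, vnorm, inner.
  rewrite dth_periodic by exact Hi. do 2 f_equal.
  apply sumR_ext; intros j Hj. rewrite dth_periodic by exact Hj. reflexivity.
Qed.

(* Integration by parts against the periodic tangential component [<T, d_v C>]. *)
Lemma RInt_dspeed_v_by_parts v : (forall th, 0 < speed n C th v) ->
  RInt (fun th => inner n (dth C th v) (dvth C th v) / speed n C th v) 0 (2 * PI)
  = - RInt (fun th => inner n (curv n C th v) (dv C th v) * speed n C th v) 0 (2 * PI).
Proof.
  intros Hpos.
  set (f := fun th => inner n (tangent n C th v) (dv C th v)).
  set (g := fun th => inner n (curv n C th v) (dv C th v) * speed n C th v).
  set (k := fun th => inner n (dth C th v) (dvth C th v) / speed n C th v).
  assert (Hf : forall th, is_derive f th (g th + k th)).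
  { intros th. unfold f, g, k.
    replace (inner n (curv n C th v) (dv C th v) * speed n C th v
             + inner n (dth C th v) (dvth C th v) / speed n C th v)
      with (inner n (dtangent n C th v) (dv C th v) + inner n (tangent n C th v) (dvth C th v)).
    - apply (is_derive_inner n (fun t => tangent n C t v) (fun t => dv C t v)
               (dtangent n C th v) (dvth C th v)); intros i Hi.
      + apply is_derive_tangent; auto.
      + change (dvth C th v i) with (partial2 (partial1 (C i)) th v).
        rewrite <- (mixed_partials (C i) th v (HC i Hi)).
        apply Derive_correct, (ex_d1d2 _ (HC i Hi)).
    - specialize (Hpos th). f_equal.
      + unfold inner. rewrite Rmult_comm, <- sumR_scal. apply sumR_ext; intros i Hi.
        rewrite curvE by auto. field. lra.
      + unfold inner, Rdiv. rewrite Rmult_comm, <- sumR_scal. apply sumR_ext; intros i Hi.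
        unfold tangent, Rdiv. ring. }
  assert (Hg : ex_RInt g 0 (2 * PI)).
  { apply (ex_RInt_of_continuity_2d_pt 0 (2 * PI) ltac:(lra)
             (fun t s => inner n (curv n C t s) (dv C t s) * speed n C t s) v).
    intros th _. apply continuity_2d_pt_mult;
      [apply continuity_2d_pt_inner_curv_dv, Hpos | apply continuity_2d_pt_speed]. }
  assert (Hk : ex_RInt k 0 (2 * PI)).
  { apply (ex_RInt_of_continuity_2d_pt 0 (2 * PI) ltac:(lra)
             (fun t s => inner n (dth C t s) (dvth C t s) / speed n C t s) v).
    intros th _. apply continuity_2d_pt_dspeed_v, Hpos. }
  assert (Hgk : is_RInt (fun th => g th + k th) 0 (2 * PI) (minus (f (2 * PI)) (f 0))).
  { apply (is_RInt_derive (V := R_CompleteNormedModule) f); intros th _; [apply Hf|].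
    apply (continuity_2d_pt_continuous (fun t s =>
      inner n (curv n C t s) (dv C t s) * speed n C t s
      + inner n (dth C t s) (dvth C t s) / speed n C t s)).
    apply continuity_2d_pt_plus; [apply continuity_2d_pt_mult|].
    - apply continuity_2d_pt_inner_curv_dv, Hpos.
    - apply continuity_2d_pt_speed.
    - apply continuity_2d_pt_dspeed_v, Hpos. }
  assert (Hf0 : f (2 * PI) = f 0).
  { unfold f. apply inner_ext; intros i Hi. rewrite tangent_periodic, dv_periodic by exact Hi.
    reflexivity. }
  rewrite Hf0 in Hgk.
  assert (E : RInt (fun th => plus (g th) (k th)) 0 (2 * PI) = minus (f 0) (f 0))
    by (apply is_RInt_unique, Hgk).
  rewrite (RInt_plus (V := R_CompleteNormedModule) g k) in E by assumption.
  unfold minus, plus, opp in E; simpl in E. lra.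
Qed.

Lemma is_derive_len v : (forall th, 0 < speed n C th v) ->
  is_derive (len n C) v
    (RInt (fun th => inner n (dth C th v) (dvth C th v) / speed n C th v) 0 (2 * PI)).
Proof.
  intros Hpos.
  destruct (locally_pos_segment 0 (2 * PI) ltac:(lra) (speed n C) v) as [d Hd];
    [intros; apply continuity_2d_pt_speed | intros; apply Hpos |].
  replace (RInt (fun th => inner n (dth C th v) (dvth C th v) / speed n C th v) 0 (2 * PI))
    with (RInt (fun th => Derive (fun s => speed n C th s) v) 0 (2 * PI))
    by (apply RInt_ext; intros th _; apply is_derive_unique, is_derive_speed_v, Hpos).
  apply (is_derive_RInt_param (fun s th => speed n C th s)).
  - exists d. intros y Hy th Hth. rewrite Rmin_left, Rmax_right in Hth by lra.
    eexists. apply is_derive_speed_v, Hd; [exact Hth | exact Hy].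
  - intros th _. apply (continuity_2d_pt_swap (fun t s => Derive (fun z => speed n C t z) s)).
    apply continuity_2d_pt_Derive_speed_v, Hpos.
  - exists d. intros y _. apply (ex_RInt_of_continuity_2d_pt 0 (2 * PI) ltac:(lra) (speed n C) y).
    intros; apply continuity_2d_pt_speed.
Qed.

Lemma first_variation_len v : (forall th, 0 < speed n C th v) ->
  is_derive (len n C) v
    (- RInt (fun th => inner n (curv n C th v) (dv C th v) * speed n C th v) 0 (2 * PI)).
Proof. intros Hpos. rewrite <- RInt_dspeed_v_by_parts by exact Hpos. apply is_derive_len, Hpos. Qed.

Lemma len_pos v : (forall th, 0 < speed n C th v) -> 0 < len n C v.
Proof.
  intros Hpos. apply RInt_gt_0; [lra | intros; apply Hpos |].
  intros th _. apply (continuity_2d_pt_continuous (speed n C)), continuity_2d_pt_speed.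
Qed.

Lemma ex_RInt_inner_curv_dv_sqr_speed v : (forall th, 0 < speed n C th v) ->
  ex_RInt (fun th => inner n (curv n C th v) (dv C th v) ^ 2 * speed n C th v) 0 (2 * PI).
Proof.
  intros Hpos. apply (ex_RInt_of_continuity_2d_pt 0 (2 * PI) ltac:(lra)
    (fun t s => inner n (curv n C t s) (dv C t s) ^ 2 * speed n C t s) v).
  intros th _. apply continuity_2d_pt_mult; [|apply continuity_2d_pt_speed].
  apply continuity_2d_pt_pow, continuity_2d_pt_inner_curv_dv, Hpos.
Qed.

Lemma Derive_sqrt_len_bound v : (forall th, 0 < speed n C th v) ->
  ex_derive (fun s => sqrt (len n C s)) v /\
  Rabs (Derive (fun s => sqrt (len n C s)) v)
  <= / 2 * sqrt (RInt (fun th => inner n (curv n C th v) (dv C th v) ^ 2 * speed n C th v)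
                   0 (2 * PI)).
Proof.
  intros Hpos.
  set (P := RInt (fun th => inner n (curv n C th v) (dv C th v) * speed n C th v) 0 (2 * PI)).
  set (A := RInt (fun th => inner n (curv n C th v) (dv C th v) ^ 2 * speed n C th v) 0 (2 * PI)).
  set (L := len n C v).
  assert (HL : 0 < L) by apply len_pos, Hpos.
  assert (HD : is_derive (fun s => sqrt (len n C s)) v (- P / (2 * sqrt L)))
    by (apply is_derive_sqrt; [apply first_variation_len, Hpos | exact HL]).
  split; [eexists; exact HD|].
  assert (E : Derive (fun s => sqrt (len n C s)) v = - P / (2 * sqrt L))
    by (apply is_derive_unique, HD).
  rewrite E.
  assert (HCS : P ^ 2 <= A * L).
  { apply (RInt_Cauchy_Schwarz 0 (2 * PI) ltac:(lra)
             (fun th => inner n (curv n C th v) (dv C th v)) (fun th => speed n C th v));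
      [| | | intros; apply speed_ge0].
    - apply ex_RInt_inner_curv_dv_sqr_speed, Hpos.
    - apply (ex_RInt_of_continuity_2d_pt 0 (2 * PI) ltac:(lra)
               (fun t s => inner n (curv n C t s) (dv C t s) * speed n C t s) v).
      intros th _. apply continuity_2d_pt_mult; [|apply continuity_2d_pt_speed].
      apply continuity_2d_pt_inner_curv_dv, Hpos.
    - apply (ex_RInt_of_continuity_2d_pt 0 (2 * PI) ltac:(lra) (speed n C) v).
      intros; apply continuity_2d_pt_speed. }
  assert (HsL : 0 < sqrt L) by (apply sqrt_lt_R0, HL).
  assert (HP : Rabs P <= sqrt A * sqrt L).
  { assert (0 <= A) by (assert (0 <= P ^ 2) by apply pow2_ge_0; nra).
    rewrite <- sqrt_mult_alt, <- sqrt_Rsqr_abs by assumption.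
    apply sqrt_le_1_alt. unfold Rsqr. simpl in HCS. lra. }
  unfold Rdiv. rewrite Rabs_mult, Rabs_Ropp, Rabs_inv, (Rabs_right (2 * sqrt L)) by lra.
  replace (/ 2 * sqrt A) with (sqrt A * sqrt L * / (2 * sqrt L)) by (field; lra).
  apply Rmult_le_compat_r; [apply Rlt_le, Rinv_0_lt_compat; lra | exact HP].
Qed.

Lemma J_density_ge0 th v : 0 <= J_density n C th v.
Proof.
  unfold J_density. apply Rmult_le_pos; [apply Rmult_le_pos; apply pow2_ge_0 | apply speed_ge0].
Qed.

Lemma continuity_2d_pt_J_density th v : 0 < speed n C th v ->
  continuity_2d_pt (J_density n C) th v.
Proof.
  intros Hpos. unfold J_density.
  apply continuity_2d_pt_mult; [apply continuity_2d_pt_mult|]; [| |apply continuity_2d_pt_speed];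
    apply continuity_2d_pt_pow, (continuity_2d_pt_vnorm n); intros i Hi.
  - apply continuity_2d_pt_curv; assumption.
  - unfold projN. apply continuity_2d_pt_minus; [apply continuity_2d_pt_dv, Hi|].
    apply continuity_2d_pt_mult; [|apply continuity_2d_pt_tangent; assumption].
    apply (continuity_2d_pt_inner n (dv C) (tangent n C)); intros j Hj;
      [apply continuity_2d_pt_dv, Hj | apply continuity_2d_pt_tangent; assumption].
Qed.

Lemma ex_RInt_J_density v : (forall th, 0 < speed n C th v) ->
  ex_RInt (fun th => J_density n C th v) 0 (2 * PI).
Proof.
  intros Hpos. apply (ex_RInt_of_continuity_2d_pt 0 (2 * PI) ltac:(lra) (J_density n C) v).
  intros th _. apply continuity_2d_pt_J_density, Hpos.
Qed.

Lemma continuous_J_slice v : (forall th, 0 < speed n C th v) -> continuous (J_slice n C) v.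
Proof.
  intros Hpos.
  destruct (locally_pos_segment 0 (2 * PI) ltac:(lra) (speed n C) v) as [d Hd];
    [intros; apply continuity_2d_pt_speed | intros; apply Hpos |].
  apply (continuous_RInt_param 0 (2 * PI) ltac:(lra) (J_density n C)).
  exists d. intros th s Hth Hs. apply continuity_2d_pt_J_density, Hd; assumption.
Qed.

Lemma J_slice_ge0 v : (forall th, 0 < speed n C th v) -> 0 <= J_slice n C v.
Proof.
  intros Hpos. apply RInt_ge_0; [lra | apply ex_RInt_J_density, Hpos | intros; apply J_density_ge0].
Qed.

Lemma RInt_inner_curv_dv_le_J_slice v : (forall th, 0 < speed n C th v) ->
  RInt (fun th => inner n (curv n C th v) (dv C th v) ^ 2 * speed n C th v) 0 (2 * PI)
  <= J_slice n C v.
Proof.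
  intros Hpos. apply RInt_le; [lra | | |].
  - apply ex_RInt_inner_curv_dv_sqr_speed, Hpos.
  - apply ex_RInt_J_density, Hpos.
  - intros th _. unfold J_density. apply Rmult_le_compat_r; [apply speed_ge0|].
    apply inner_curv_dv_sqr_le, Hpos.
Qed.

Lemma sqrt_len_Holder v1 v2 : (forall th v, 0 <= v <= 1 -> 0 < speed n C th v) ->
  0 <= v1 -> v1 <= v2 -> v2 <= 1 ->
  Rabs (sqrt (len n C v2) - sqrt (len n C v1)) <= sqrt (Jfun n C) / 2 * sqrt (v2 - v1).
Proof.
  intros Hpos H1 H12 H2.
  assert (Hv : forall v, 0 <= v <= 1 -> forall th, 0 < speed n C th v)
    by (intros; apply Hpos; auto).
  apply (Holder_half_of_derive_le (fun s => sqrt (len n C s))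
           (Derive (fun s => sqrt (len n C s))) (J_slice n C) 0 1); try assumption.
  - intros v Hv1. apply Derive_correct, (Derive_sqrt_len_bound v (Hv v Hv1)).
  - intros v Hv1. eapply Rle_trans; [apply (Derive_sqrt_len_bound v (Hv v Hv1))|].
    assert (sqrt (RInt (fun th => inner n (curv n C th v) (dv C th v) ^ 2 * speed n C th v)
                  0 (2 * PI)) <= sqrt (J_slice n C v))
      by (apply sqrt_le_1_alt, RInt_inner_curv_dv_le_J_slice, Hv, Hv1).
    lra.
  - intros v Hv1. apply continuous_J_slice, Hv, Hv1.
  - intros v Hv1. apply J_slice_ge0, Hv, Hv1.
Qed.

End Homotopy.

Theorem mainTheorem6 (n : nat) (C : homotopy)
  (Hsmooth : forall i, (i < n)%nat -> smooth2 (C i))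
  (Hper : forall i th v, C i (th + 2 * PI) v = C i th v)
  (Himm : forall th v, 0 <= v <= 1 -> vnorm n (dth C th v) <> 0) :
  (forall v, 0 <= v <= 1 ->
     ex_derive (fun s => sqrt (len n C s)) v /\
     Derive (fun s => sqrt (len n C s)) v <=
       / 2 * sqrt (RInt (fun th =>
           (inner n (curv n C th v) (dv C th v)) ^ 2 * speed n C th v) 0 (2 * PI)))
  /\
  (forall v1 v2, 0 <= v1 -> v1 < v2 -> v2 <= 1 ->
     sqrt (len n C v2) - sqrt (len n C v1) <= sqrt (Jfun n C) / 2 * sqrt (v2 - v1))
  /\
  (exists K : R, forall v1 v2, 0 <= v1 <= 1 -> 0 <= v2 <= 1 ->
     Rabs (sqrt (len n C v2) - sqrt (len n C v1)) <= K * sqrt (Rabs (v2 - v1))).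
Proof.
  assert (HC : forall i, (i < n)%nat -> C2 (C i))
    by (intros i Hi; apply C2_of_smooth2, Hsmooth, Hi).
  assert (Hpos : forall th v, 0 <= v <= 1 -> 0 < speed n C th v).
  { intros th v Hv. destruct (speed_ge0 n C th v) as [Hlt | Heq]; [exact Hlt|].
    exfalso. apply (Himm th v Hv). symmetry. exact Heq. }
  assert (Hold := fun v1 v2 => sqrt_len_Holder n C HC Hper v1 v2 Hpos).
  split; [|split].
  - intros v Hv.
    destruct (Derive_sqrt_len_bound n C HC Hper v (fun th => Hpos th v Hv)) as [Hex Hle].
    split; [exact Hex | eapply Rle_trans; [apply Rle_abs | exact Hle]].
  - intros v1 v2 H1 H12 H2. eapply Rle_trans; [apply Rle_abs | apply Hold; lra].
  - exists (sqrt (Jfun n C) / 2). intros v1 v2 H1 H2.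
    destruct (Rle_lt_dec v1 v2) as [H12 | H21].
    + rewrite (Rabs_right (v2 - v1)) by lra. apply Hold; lra.
    + rewrite Rabs_minus_sym, (Rabs_left (v2 - v1)), Ropp_minus_distr by lra. apply Hold; lra.
Qed.
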